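(* Let $d\ge 2$ and $t,k$ be positive integers. Let $\mathcal{S}$ be a finite collection of spheres in $\mathbb{R}^d$ whose intersection graph $G=G(\mathcal{S})$ does not contain $K_{t,t}$ as a subgraph, and suppose every nested subset of $\mathcal{S}$ has size at most $k$. Then for every positive integer $r$, $\mathrm{scol}_r(G)\le 2kt(2r+2)^d$.
   Context: A sphere in $\mathbb{R}^d$ is the boundary of a closed ball of positive radius; $B(S)$ is the closed ball with boundary $S$. $G(\mathcal{S})$ has vertex set $\mathcal{S}$, two spheres adjacent iff they intersect. A sphere $S'$ contains a different sphere $S$ if $B(S)\subseteq B(S')$; a collection is nested if of any two of its spheres one contains the other. Given a linear order $\le$ on $V(G)$ and $v\in V(G)$, a vertex $u$ is strongly $r$-reachable from $v$ if $u\le v$ and there is a $v$–$u$ path of length at most $r$ in which $u$ is the only vertex smaller than $v$; the $r$-width of $\le$ is the maximum over $v$ of the number of vertices strongly $r$-reachable from $v$, and $\mathrm{scol}_r(G)$ is the minimum $r$-width over all linear orders of $V(G)$. *)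

From HB Require Import structures.
From mathcomp Require Import all_boot all_order all_algebra.
From mathcomp Require Import fingroup perm.
From mathcomp Require Import boolp reals.
Set Implicit Arguments. Unset Strict Implicit. Unset Printing Implicit Defensive.
Import Order.TTheory GRing.Theory Num.Theory.
Local Open Scope ring_scope.

Section Spheres.
Variables (R : realType) (d : nat) (V : finType).
(* A finite collection of spheres is indexed by V: sphere v has centre c v
   in R^d and radius rho v > 0. *)
Variables (c : V -> 'rV[R]_d) (rho : V -> R).

Definition dist2 (x y : 'rV[R]_d) : R := \sum_(i < d) (x ord0 i - y ord0 i) ^+ 2.

Definition spheres_meet (u v : V) : Prop :=
  exists x : 'rV[R]_d, dist2 x (c u) = rho u ^+ 2 /\ dist2 x (c v) = rho v ^+ 2.

Definition sphere_graph : rel V := fun u v => (u != v) && `[< spheres_meet u v >].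

Definition contains (v u : V) : Prop :=
  forall x : 'rV[R]_d, dist2 x (c u) <= rho u ^+ 2 -> dist2 x (c v) <= rho v ^+ 2.

Definition nested (A : {set V}) : Prop :=
  forall u v, u \in A -> v \in A -> u != v -> contains u v \/ contains v u.
End Spheres.

Section Graphs.
Variable V : finType.

Definition has_Ktt (e : rel V) (t : nat) : Prop :=
  exists A B : {set V}, [/\ #|A| = t, #|B| = t, [disjoint A & B] &
    forall a b, a \in A -> b \in B -> e a b].

(* A linear order on V is given by a permutation s : the position of x is
   enum_rank (s x); x <= y iff position x <= position y. Every linear order
   arises this way. *)
Definition pos (s : {perm V}) (x : V) : nat := enum_rank (s x).

(* u is strongly r-reachable from v w.r.t. the order s: u <= v and there is a
   path v = x_0, x_1, ..., x_m = u (m <= r, distinct vertices, consecutive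
   ones adjacent) in which every vertex other than u is >= v. *)
Definition sreach (e : rel V) (r : nat) (s : {perm V}) (v u : V) : bool :=
  (pos s u <= pos s v)%N &&
  [exists m : 'I_r.+1, exists p : m.-tuple V,
     [&& path e v p, last v p == u, uniq (v :: p) &
         all (fun x => pos s v <= pos s x)%N (belast v p)]].

Definition width (e : rel V) (r : nat) (s : {perm V}) : nat :=
  \max_(v : V) #|[set u | sreach e r s v u]|.

Definition scol (e : rel V) (r : nat) : nat :=
  \big[minn/#|V|]_(s : {perm V}) width e r s.
End Graphs.

From HB Require Import structures.
From mathcomp Require Import all_boot all_order all_algebra.
From mathcomp Require Import fingroup perm.
From mathcomp Require Import boolp reals.
From mathcomp Require Import ring lra zify.
Import Order.TTheory GRing.Theory Num.Theory.
Local Open Scope ring_scope.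
Set Implicit Arguments. Unset Strict Implicit. Unset Printing Implicit Defensive.

(* Order the spheres by decreasing radius.  If u is strongly r-reachable from v,
   every sphere of the witnessing path other than u has radius at most rho_v, so
   walking along it from c_v shows that B(S_u) contains a ball of radius rho_v
   centred within 2 r rho_v of c_v.  These inner balls have ply at most k (2t - 1):
   the balls through a point are partially ordered by containment, their chains are
   nested families, and their antichains are cliques of G (two non-nested balls
   sharing a point have intersecting spheres), hence have fewer than 2t elements.
   Finally, m-ply balls of radius rho centred within L rho of a point number at
   most m (L + 2)^d, by counting the points of a fine grid inside them. *)

Section Euclid.
Variables (R : rcfType) (d : nat).
Implicit Types (x y z : 'rV[R]_d) (a b : R).

Definition vdot x y : R := \sum_(i < d) x ord0 i * y ord0 i.
Definition vnorm x : R := Num.sqrt (vdot x x).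
Definition vdist x y : R := vnorm (x - y).

Lemma vdotC x y : vdot x y = vdot y x.
Proof. by apply: eq_bigr => i _; rewrite mulrC. Qed.

Lemma vdotDZr a b x y z : vdot x (a *: y + b *: z) = a * vdot x y + b * vdot x z.
Proof.
rewrite /vdot !mulr_sumr -big_split /=; apply: eq_bigr => i _; rewrite !mxE; ring.
Qed.

Lemma vdotDZ a b x y :
  vdot (a *: x + b *: y) (a *: x + b *: y) =
  a ^+ 2 * vdot x x + 2 * a * b * vdot x y + b ^+ 2 * vdot y y.
Proof.
rewrite /vdot !mulr_sumr -!big_split /=; apply: eq_bigr => i _; rewrite !mxE; ring.
Qed.

Lemma vdot0l x : vdot 0 x = 0.
Proof. by have := vdotDZr 0 0 x 0 0; rewrite !scale0r addr0 !mul0r addr0 vdotC. Qed.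

Lemma vdot_delta x (j : 'I_d) : vdot x (delta_mx ord0 j) = x ord0 j.
Proof.
rewrite /vdot (bigD1 j) //= big1 => [|i ij]; rewrite !mxE ?eqxx ?mulr1 ?addr0 //.
by rewrite (negbTE ij) andbF mulr0.
Qed.

Lemma vdot_ge0 x : 0 <= vdot x x.
Proof. by apply: sumr_ge0 => i _; rewrite -expr2 sqr_ge0. Qed.

Lemma vdot_eq0 x : (vdot x x == 0) = (x == 0).
Proof.
apply/eqP/eqP => [x0|->]; last exact: vdot0l.
apply/rowP => i; rewrite mxE; apply/eqP; rewrite -sqrf_eq0 expr2; apply/eqP.
by move/psumr_eq0P: x0; apply => // j _; rewrite -expr2 sqr_ge0.
Qed.

Lemma vdot_gt0 x : x != 0 -> 0 < vdot x x.
Proof. by rewrite -vdot_eq0 lt_def vdot_ge0 andbT. Qed.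

Lemma vdot_CauchySchwarz x y : vdot x y ^+ 2 <= vdot x x * vdot y y.
Proof.
have [->|y0] := eqVneq y 0.
  by rewrite [vdot x 0]vdotC !vdot0l expr0n mulr0.
have := vdot_ge0 (vdot y y *: x + (- vdot x y) *: y).
rewrite vdotDZ.
have -> : vdot y y ^+ 2 * vdot x x + 2 * vdot y y * - vdot x y * vdot x y +
    (- vdot x y) ^+ 2 * vdot y y =
    vdot y y * (vdot x x * vdot y y - vdot x y ^+ 2) by ring.
by rewrite pmulr_rge0 ?vdot_gt0 // subr_ge0.
Qed.

Lemma vnorm_ge0 x : 0 <= vnorm x. Proof. exact: sqrtr_ge0. Qed.

Lemma vnorm_sqr x : vnorm x ^+ 2 = vdot x x.
Proof. by rewrite sqr_sqrtr // vdot_ge0. Qed.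

Lemma vnorm_eq0 x : (vnorm x == 0) = (x == 0).
Proof. by rewrite -sqrf_eq0 vnorm_sqr vdot_eq0. Qed.

Lemma vnorm0 : vnorm 0 = 0.
Proof. by apply/eqP; rewrite vnorm_eq0. Qed.

Lemma vnorm_leP x b : 0 <= b -> (vnorm x <= b) = (vdot x x <= b ^+ 2).
Proof. by move=> b0; rewrite -vnorm_sqr ler_pXn2r ?nnegrE ?vnorm_ge0. Qed.

Lemma vdot_le_vnorm x y : vdot x y <= vnorm x * vnorm y.
Proof.
have [le0|gt0] := leP (vdot x y) 0; first by rewrite (le_trans le0) ?mulr_ge0 ?vnorm_ge0.
rewrite -(ler_pXn2r (n := 2)) ?nnegrE ?mulr_ge0 ?vnorm_ge0 ?(ltW gt0) //.
by rewrite exprMn !vnorm_sqr vdot_CauchySchwarz.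
Qed.

Lemma vnormD x y : vnorm (x + y) <= vnorm x + vnorm y.
Proof.
rewrite vnorm_leP ?addr_ge0 ?vnorm_ge0 //.
have -> : x + y = 1 *: x + 1 *: y by rewrite !scale1r.
by rewrite vdotDZ -!vnorm_sqr; have := vdot_le_vnorm x y; nra.
Qed.

Lemma vnormZ a x : vnorm (a *: x) = `|a| * vnorm x.
Proof.
rewrite /vnorm.
have -> : vdot (a *: x) (a *: x) = a ^+ 2 * vdot x x.
  by have := vdotDZ a 0 x x; rewrite scale0r addr0 => ->; ring.
by rewrite sqrtrM ?sqr_ge0 // sqrtr_sqr.
Qed.

Lemma vnormN x : vnorm (- x) = vnorm x.
Proof. by rewrite -scaleN1r vnormZ normrN normr1 mul1r. Qed.

Lemma vnorm_sqrtE x b : 0 <= b -> vdot x x = b ^+ 2 -> vnorm x = b.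
Proof. by move=> b0 xb; rewrite /vnorm xb sqrtr_sqr ger0_norm. Qed.

Lemma vdistC x y : vdist x y = vdist y x.
Proof. by rewrite /vdist -vnormN opprB. Qed.

Lemma vdist_ge0 x y : 0 <= vdist x y. Proof. exact: vnorm_ge0. Qed.

Lemma vdistxx x : vdist x x = 0.
Proof. by apply/eqP; rewrite vnorm_eq0 subrr. Qed.

Lemma vdist_triangle x y z : vdist x z <= vdist x y + vdist y z.
Proof. by rewrite /vdist (le_trans _ (vnormD _ _)) // addrA subrK. Qed.

Lemma vdist_eq0 x y : (vdist x y == 0) = (x == y).
Proof. by rewrite vnorm_eq0 subr_eq0. Qed.

Lemma vnorm_coord x (i : 'I_d) : `|x ord0 i| <= vnorm x.
Proof.
rewrite -(ler_pXn2r (_ : 0 < 2)%N) ?nnegrE ?vnorm_ge0 // vnorm_sqr real_normK ?num_real //.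
rewrite /vdot (bigD1 i) //= -expr2 lerDl sumr_ge0 // => j _.
by rewrite -expr2 sqr_ge0.
Qed.

Lemma vnorm_le_coord x b : 0 <= b -> (forall i, `|x ord0 i| <= b) -> vnorm x <= b * d%:R.
Proof.
move=> b0 xb; rewrite vnorm_leP ?mulr_ge0 //.
apply: (@le_trans _ _ (\sum_(i < d) b ^+ 2)).
  apply: ler_sum => i _; rewrite -expr2 -real_normK ?num_real //.
  by rewrite ler_pXn2r ?nnegrE.
rewrite sumr_const card_ord exprMn -(mulr_natr (b ^+ 2)) ler_wpM2l ?sqr_ge0 //.
by rewrite -natrX ler_nat; nia.
Qed.
End Euclid.

Section Balls.
Variables (R : rcfType) (d : nat).
Implicit Types (x y cu cw : 'rV[R]_d) (ru rw : R).

Lemma row_neq0 x (j : 'I_d) : x ord0 j != 0 -> x != 0.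
Proof. by apply: contraNneq => ->; rewrite -vdot_delta vdot0l. Qed.

Lemma vnorm_delta (j : 'I_d) : vnorm (delta_mx ord0 j : 'rV[R]_d) = 1.
Proof. by apply: vnorm_sqrtE; rewrite // vdot_delta mxE !eqxx expr1n. Qed.

Lemma exists_unit_scale x : (0 < d)%N -> exists2 e, vnorm e = 1 & x = vnorm x *: e.
Proof.
move=> d0; have [->|x0] := eqVneq x 0.
  by exists (delta_mx ord0 (Ordinal d0)); rewrite ?vnorm_delta // vnorm0 scale0r.
have nx0 : vnorm x != 0 by rewrite vnorm_eq0.
exists ((vnorm x)^-1 *: x); last by rewrite scalerA mulfV // scale1r.
by rewrite vnormZ ger0_norm ?invr_ge0 ?vnorm_ge0 // mulVf.
Qed.

Lemma exists_orthogonal x : (1 < d)%N -> exists2 g, g != 0 & vdot x g = 0.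
Proof.
move=> d1; pose i0 : 'I_d := Ordinal (ltnW d1); pose i1 : 'I_d := Ordinal d1.
have [x0|x0] := eqVneq (x ord0 i0) 0.
  exists (delta_mx ord0 i0); last by rewrite vdot_delta.
  by apply: (@row_neq0 _ i0); rewrite mxE !eqxx oner_eq0.
exists (x ord0 i1 *: delta_mx ord0 i0 + (- x ord0 i0) *: delta_mx ord0 i1).
  by apply: (@row_neq0 _ i1); rewrite !mxE !eqxx /= mulr0 add0r mulr1 oppr_eq0.
by rewrite vdotDZr !vdot_delta; ring.
Qed.

Lemma ball_subP cu cw ru rw : (0 < d)%N -> 0 <= ru ->
  (forall x, vdist x cu <= ru -> vdist x cw <= rw) <-> vdist cu cw + ru <= rw.
Proof.
move=> d0 ru0; split=> [sub | le x xu]; last first.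
  by rewrite (le_trans (vdist_triangle x cu cw)) // (le_trans _ le) // addrC lerD2l.
have [e e1 eE] := exists_unit_scale (cu - cw) d0.
have := sub (cu + ru *: e).
rewrite {1}/vdist addrC addKr vnormZ e1 ger0_norm // mulr1 lexx => /(_ isT).
by rewrite /vdist addrAC {1}eE -scalerDl vnormZ e1 ger0_norm ?mulr1 // addr_ge0 ?vnorm_ge0.
Qed.

(* Points of both spheres: [p = cu + a *: (cu - cw) + b *: g] with [g] orthogonal
   to [cu - cw]; subtracting the two sphere equations determines [a], then [b]. *)
Lemma spheres_intersect cu cw ru rw : (1 < d)%N ->
  `|ru - rw| < vdist cu cw -> vdist cu cw <= ru + rw ->
  exists p, vdist p cu = ru /\ vdist p cw = rw.
Proof.
move=> d1 far near; set D := vdist cu cw in far near.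
have [ru0 rw0] : 0 <= ru /\ 0 <= rw.
  by move: far; rewrite ltr_norml; split; lra.
have D0 : 0 < D by apply: le_lt_trans far.
pose v := cu - cw; have vD : vdot v v = D ^+ 2 by rewrite -vnorm_sqr.
have [g g0 vg] := exists_orthogonal v d1; have G0 := vdot_gt0 g0.
pose a := (rw ^+ 2 - ru ^+ 2 - D ^+ 2) / (2 * D ^+ 2).
have bb0 : 0 <= ru ^+ 2 - a ^+ 2 * D ^+ 2.
  have -> : ru ^+ 2 - a ^+ 2 * D ^+ 2 =
      (rw - D + ru) * (rw + D - ru) * (D + ru - rw) * (D + ru + rw) / (2 * D) ^+ 2.
    by rewrite /a; field; rewrite gt_eqF.
  by move: far; rewrite ltr_norml => /andP[? ?]; rewrite divr_ge0 ?sqr_ge0 ?mulr_ge0 //; lra.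
pose b := Num.sqrt ((ru ^+ 2 - a ^+ 2 * D ^+ 2) / vdot g g).
have b2 : b ^+ 2 = (ru ^+ 2 - a ^+ 2 * D ^+ 2) / vdot g g.
  by rewrite sqr_sqrtr // divr_ge0 // ltW.
exists (cu + (a *: v + b *: g)); split; apply: vnorm_sqrtE => //.
  by rewrite addrC addKr vdotDZ vg vD b2; field; rewrite gt_eqF.
have -> : cu + (a *: v + b *: g) - cw = (a + 1) *: v + b *: g.
  by apply/rowP => i; rewrite !mxE; ring.
by rewrite vdotDZ vg vD b2 /a; field; rewrite !gt_eqF // exprn_gt0.
Qed.

Lemma inner_ball cu ru rv y : (0 < d)%N -> 0 <= rv <= ru -> 0 < ru -> vdist y cu = ru ->
  exists q, vdist q y <= rv /\ forall x, vdist x q <= rv -> vdist x cu <= ru.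
Proof.
move=> d0 /andP[rv0 rvu] ru0 yu; have ru_neq0 := lt0r_neq0 ru0.
pose q := cu + ((ru - rv) / ru) *: (y - cu).
have qcu : vdist q cu = ru - rv.
  rewrite /vdist /q addrC addKr vnormZ -/(vdist _ _) yu ger0_norm ?divfK //.
  by rewrite divr_ge0 ?subr_ge0 // ltW.
exists q; split; last by apply/(ball_subP _ _ _ d0 rv0); rewrite qcu subrK.
rewrite /vdist; have -> : q - y = (rv / ru) *: (cu - y) by apply/rowP => i; rewrite !mxE; field.
by rewrite vnormZ -/(vdist _ _) vdistC yu ger0_norm ?divfK // divr_ge0 // ltW.
Qed.
End Balls.

Lemma sum_card_le_mul (T V : finType) (S : {set V}) (A : V -> {set T}) (Q : {set T}) m :
  (forall u, u \in S -> A u \subset Q) ->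
  (forall z, #|[set u in S | z \in A u]| <= m)%N ->
  (\sum_(u in S) #|A u| <= m * #|Q|)%N.
Proof.
move=> AQ mult.
have card_sepE (I : finType) (B : {set I}) (p : pred I) :
    #|[set x in B | p x]| = (\sum_(x in B) p x)%N.
  rewrite -sum1_card; under eq_bigl => x do rewrite inE.
  by rewrite big_mkcondr; apply: eq_bigr => x _; case: (p x).
rewrite (eq_bigr (fun u => #|[set z in Q | z \in A u]|)) => [|u uS]; last first.
  by apply: eq_card => z; rewrite inE andb_idl //; apply: subsetP (AQ u uS) z.
under eq_bigr => u _ do rewrite card_sepE.
rewrite exchange_big mulnC -sum_nat_const leq_sum // => z _.
by rewrite -card_sepE mult.
Qed.

(* Integer vectors with coordinates in [-B, B] are enumerated by the finite type
   'rV['I_(2B+1)]_d, which turns counting lattice points into a cardinality. *)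
Section LatticeBox.
Variables (d B : nat).
Implicit Types (y : 'rV[int]_d) (P Q : pred 'rV[int]_d).

Definition box_point (z : 'rV['I_(2 * B).+1]_d) : 'rV[int]_d :=
  map_mx (fun i : 'I_(2 * B).+1 => i%:Z - B%:Z) z.

Definition box_index y : 'rV['I_(2 * B).+1]_d := map_mx (fun a : int => inord (absz (a + B%:Z))) y.

Definition in_box y := forall i, `|y ord0 i| <= B%:Z.

Lemma box_point_inj : injective box_point.
Proof.
move=> z1 z2 eq_z; apply/rowP => i; apply/val_inj/eqP.
by have /rowP/(_ i) := eq_z; rewrite !mxE => /addIr/eqP; rewrite eqz_nat.
Qed.

Lemma box_indexK y : in_box y -> box_point (box_index y) = y.
Proof.
move=> yB; apply/rowP => i; have := yB i; rewrite !mxE; set a := y _ i.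
rewrite ler_norml => /andP[al ar]; have a0 : 0 <= a + B%:Z by lia.
have aB : (absz (a + B%:Z)%R < (2 * B).+1)%N by rewrite -ltz_nat gez0_abs //; lia.
by rewrite inordK // gez0_abs ?addrK.
Qed.

Definition lattice_count P := #|[set z | P (box_point z)]|.

Lemma lattice_count_le_mul (F : finType) P Q (f : 'rV[int]_d -> 'rV[int]_d * F) :
  (forall y, Q y -> in_box y) -> {in P &, injective f} ->
  (forall y, P y -> Q (f y).1) ->
  (lattice_count P <= lattice_count Q * #|F|)%N.
Proof.
move=> Qbox f_inj PQ; pose g z := (box_index (f (box_point z)).1, (f (box_point z)).2).
have gK z : P (box_point z) -> box_point (g z).1 = (f (box_point z)).1.
  by move=> Pz; rewrite box_indexK //; apply/Qbox/PQ.
rewrite /lattice_count -(cardsT F) -cardsX -(card_in_imset (f := g)).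
  apply/subset_leq_card/subsetP => _ /imsetP[z /[!inE] Pz ->].
  by rewrite gK // andbT PQ.
move=> z1 z2 /[!inE] Pz1 Pz2 [/(congr1 box_point) e1 e2].
apply/box_point_inj/f_inj; rewrite ?inE //.
by rewrite [LHS]surjective_pairing [RHS]surjective_pairing -gK // e1 gK // e2.
Qed.
End LatticeBox.

(* Grid of mesh eps = rho / K: every ball B(q u, rho) contains a translate of the
   grid points of norm at most K - d, while splitting the grid points of
   B(c, (L+1) rho) by quotient and remainder modulo M = L + 2 maps them into that
   same set, M^d to one; the choice K = d (2M + 1) makes the quotients fit. *)
Section Packing.
Variables (R : realType) (d : nat) (rho : R) (c : 'rV[R]_d) (L : nat).
Variables (V : finType) (S : {set V}) (q : V -> 'rV[R]_d) (m : nat).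
Hypotheses (d0 : (0 < d)%N) (rho_gt0 : 0 < rho).
Hypothesis q_near : forall u, u \in S -> vdist (q u) c <= L%:R * rho.
Hypothesis ply_le : forall x, (#|[set u in S | (vdist x (q u) <= rho)%R]| <= m)%N.

Let M := L.+2.
Let K := (d * (2 * M + 1))%N.
Let eps := rho / K%:R.
Let zvec (y : 'rV[int]_d) : 'rV[R]_d := map_mx (intmul 1) y.
Let lat y := eps *: zvec y.
Let rnd (x : 'rV[R]_d) : 'rV[int]_d := map_mx (fun a => Num.floor (a / eps)) x.
Let zdiv (y : 'rV[int]_d) := map_mx (fun a => (a %/ M%:Z)%Z) y.
Let zmod (y : 'rV[int]_d) : 'rV['I_M]_d := map_mx (fun a => inord (absz (a %% M%:Z)%Z)) y.

Let K_gt0 : 0 < K%:R :> R.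
Proof. by rewrite ltr0n /K muln_gt0 d0. Qed.

Let rho_ge0 : 0 <= rho := ltW rho_gt0.

Let eps_gt0 : 0 < eps.
Proof. by rewrite divr_gt0 ?K_gt0. Qed.

Let epsK : eps * K%:R = rho.
Proof. by rewrite divfK ?gt_eqF ?K_gt0. Qed.

Let KE : K%:R = d%:R * (2 * M%:R + 1) :> R.
Proof. by rewrite /K natrM natrD natrM. Qed.

Let zvecB a b : zvec (a - b) = zvec a - zvec b.
Proof. exact: map_mxB. Qed.

Let vdist_lat a b : vdist (lat a) (lat b) = eps * vnorm (zvec (a - b)).
Proof. by rewrite /vdist /lat -scalerBr vnormZ ger0_norm ?zvecB // ltW. Qed.

Let vdist_lat_rnd x : vdist (lat (rnd x)) x <= eps * d%:R.
Proof.
apply: vnorm_le_coord => [|i]; first exact: ltW.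
rewrite !mxE; set fl := Num.floor _.
have /andP[fl_le lt_fl] := floor_itv (x ord0 i / eps); rewrite -/fl intrD in lt_fl.
have lo : eps * fl%:~R <= x ord0 i by rewrite mulrC -ler_pdivlMr.
have hi : x ord0 i < eps * (fl%:~R + 1) by rewrite mulrC -ltr_pdivrMr.
by rewrite ler_norml; apply/andP; split; nra.
Qed.

Let zmodE y i : (zmod y ord0 i : nat)%:Z = (y ord0 i %% M%:Z)%Z.
Proof.
have Mz : M%:Z != 0 by [].
rewrite mxE inordK ?gez0_abs ?modz_ge0 // -ltz_nat gez0_abs ?modz_ge0 //.
by rewrite ltz_pmod.
Qed.

Let zdivmod_inj : injective (fun y => (zdiv y, zmod y)).
Proof.
move=> a b [/rowP ab1 /rowP ab2]; apply/rowP => i.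
rewrite (divz_eq (a ord0 i) M%:Z) (divz_eq (b ord0 i) M%:Z) -!zmodE ab2.
by have := ab1 i; rewrite !mxE => ->.
Qed.

Let vnorm_zdiv y : M%:R * vnorm (zvec (zdiv y)) <= vnorm (zvec y) + M%:R * d%:R.
Proof.
have M_gt0 : 0 < M%:R :> R by rewrite ltr0n.
pose r : 'rV[int]_d := map_mx (fun a => (a %% M%:Z)%Z) y.
have zdivE : M%:R *: zvec (zdiv y) = zvec y - zvec r.
  apply/rowP => i; rewrite !mxE; set a := y _ i.
  by rewrite [in a%:~R](divz_eq a M%:Z) intrD addrK intrM mulrC.
have := vnormZ M%:R (zvec (zdiv y)); rewrite ger0_norm ?ler0n // zdivE => <-.
rewrite (le_trans (vnormD _ _)) // vnormN lerD2l.
apply: vnorm_le_coord => // i; rewrite /r !mxE.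
by rewrite ger0_norm ?ler0z ?modz_ge0 // pmulrn ler_int ltW // ltz_pmod.
Qed.

Let small y := vnorm (zvec y) <= K%:R - d%:R.
Let near u z := vdist (lat z) (q u) <= rho.
Let big z := vdist (lat z) c <= L.+1%:R * rho.
Let B := (Num.truncn (K%:R + (vnorm c + L.+1%:R * rho) / eps)).+1.

Let in_box_of y : vnorm (zvec y) <= K%:R + (vnorm c + L.+1%:R * rho) / eps -> in_box B y.
Proof.
move=> yX i; rewrite -(ler_int R) intr_norm -pmulrn (le_trans _ (ltW (truncnS_gt _))) //.
by apply: le_trans yX; have := vnorm_coord (zvec y) i; rewrite mxE.
Qed.

Let small_in_box y : small y -> in_box B y.
Proof.
move=> small_y; apply: in_box_of; apply: (le_trans small_y).
by rewrite lerBlDr -addrA lerDl addr_ge0 ?divr_ge0 ?addr_ge0 ?vnorm_ge0 ?mulr_ge0 ?rho_ge0.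
Qed.

Let big_in_box z : big z -> in_box B z.
Proof.
move=> big_z; apply: in_box_of; rewrite -(ler_pM2l eps_gt0) mulrDr mulrCA divff ?gt_eqF // mulr1.
have -> : eps * vnorm (zvec z) = vnorm (lat z) by rewrite vnormZ ger0_norm // ltW.
rewrite -[lat z](subrK c) (le_trans (vnormD _ _)) // -/(vdist _ _) addrC.
move: big_z; rewrite /big epsK; have := rho_ge0; lra.
Qed.

Let near_big u z : u \in S -> near u z -> big z.
Proof.
move=> uS near_z; rewrite /big (le_trans (vdist_triangle _ (q u) _)) //.
by have := q_near uS; rewrite -addn1 natrD mulrDl mul1r; move: near_z; rewrite /near; lra.
Qed.

Let count_small_le_near u : u \in S -> (lattice_count B small <= lattice_count B (near u))%N.
Proof.
move=> uS; rewrite -[X in (_ <= X)%N]muln1 -[1%N]card_unit.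
apply: (lattice_count_le_mul (f := fun y => (y + rnd (q u), tt))).
- by move=> z /(near_big uS); apply: big_in_box.
- by move=> y1 y2 _ _ [/addIr].
move=> y small_y; rewrite /near /= (le_trans (vdist_triangle _ (lat (rnd (q u))) _)) //.
rewrite vdist_lat addrK -epsK -[K%:R](subrK d%:R) mulrDr lerD ?vdist_lat_rnd //.
by rewrite ler_pM2l.
Qed.

Let sum_count_near_le : (\sum_(u in S) lattice_count B (near u) <= m * lattice_count B big)%N.
Proof.
apply: sum_card_le_mul => [u uS|z].
  by apply/subsetP => z; rewrite !inE; apply: near_big.
apply: leq_trans (ply_le (lat (box_point z))); apply: subset_leq_card.
by apply/subsetP => u; rewrite !inE.
Qed.

Let count_big_le : (lattice_count B big <= lattice_count B small * M ^ d)%N.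
Proof.
have -> : (M ^ d)%N = #|{: 'rV['I_M]_d}| by rewrite card_mx card_ord mul1n.
apply: (lattice_count_le_mul (f := fun z => (zdiv (z - rnd c), zmod (z - rnd c)))).
- exact: small_in_box.
- by move=> z1 z2 _ _ /zdivmod_inj/addIr.
move=> z big_z; rewrite /small /=; set y := z - rnd c.
have M_gt0 : 0 < M%:R :> R by rewrite ltr0n.
have : eps * vnorm (zvec y) <= eps * (L.+1%:R * K%:R + d%:R).
  rewrite -vdist_lat mulrDr mulrCA epsK (le_trans (vdist_triangle _ c _)) //.
  by rewrite [vdist c _]vdistC lerD ?vdist_lat_rnd.
rewrite ler_pM2l // => y_le; have zdiv_le := vnorm_zdiv y.
have LM : L.+1%:R = M%:R - 1 :> R by rewrite /M [L.+2%:R]mulrSr addrK.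
rewrite LM KE in y_le; rewrite KE -(ler_pM2l M_gt0); nra.
Qed.

Let count_small_gt0 : (0 < lattice_count B small)%N.
Proof.
rewrite card_gt0; apply/set0Pn; exists (box_index B 0).
rewrite inE box_indexK => [|i]; last by rewrite mxE normr0.
by rewrite /small /zvec map_mx0 vnorm0 KE mulrDr mulr1 addrK !mulr_ge0.
Qed.

Lemma card_le_packing : (#|S| <= m * L.+2 ^ d)%N.
Proof.
rewrite -(leq_pmul2r count_small_gt0) -sum_nat_const.
apply: (@leq_trans (\sum_(u in S) lattice_count B (near u))).
  exact: leq_sum count_small_le_near.
apply: leq_trans sum_count_near_le _.
by rewrite -mulnA leq_mul2l mulnC count_big_le orbT.
Qed.
End Packing.

Section ChainAntichain.
Variables (R : realDomainType) (V : finType) (above : V -> V -> Prop) (w : V -> R).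
Hypothesis above_refl : forall u, above u u.
Hypothesis above_trans : forall u v x, above u v -> above v x -> above u x.
Hypothesis above_weight : forall u v, above u v -> u != v -> w v < w u.
Implicit Types (A T : {set V}).

Definition chain (A : {set V}) :=
  forall u v, u \in A -> v \in A -> u != v -> above u v \/ above v u.

Definition antichain (A : {set V}) :=
  forall u v, u \in A -> v \in A -> u != v -> ~ above u v.

Lemma chain_top A a : chain A -> a \in A -> exists2 m, m \in A & forall b, b \in A -> above m b.
Proof.
move=> chA aA; case: (arg_maxP w aA) => m mA mmax; exists m => // b bA.
have [->|bm] := eqVneq b m; first exact: above_refl.
have mb : m != b by rewrite eq_sym.
case: (chA _ _ mA bA mb) => // /above_weight /(_ bm) lt_mb.
by have := mmax _ bA; rewrite /= leNgt lt_mb.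
Qed.

Definition maxima (T : {set V}) :=
  [set u in T | [forall v in T, (v != u) ==> ~~ `[< above v u >]]].

Lemma maxima_sub T : maxima T \subset T.
Proof. by apply/subsetP => u; rewrite inE => /andP[]. Qed.

Lemma antichain_maxima T : antichain (maxima T).
Proof.
move=> u v; rewrite !inE => /andP[uT _] /andP[_ /forall_inP vmax] uv.
by apply/asboolPn; apply: (implyP (vmax u uT)).
Qed.

Lemma maxima_above T m : m \in T -> exists2 m', m' \in maxima T & above m' m.
Proof.
move=> mT; pose up := [set v in T | `[< above v m >]].
have mup : m \in up by rewrite inE mT; apply/asboolP.
case: (arg_maxP w mup) => m' m'up m'max.
have /[!inE] /andP[m'T /asboolP m'm] : m' \in up := m'up.
exists m' => //; rewrite inE m'T; apply/forall_inP => x xT.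
apply/implyP => xm'; apply/asboolPn => xm'_above.
have xup : x \in up by rewrite inE xT; apply/asboolP; exact: above_trans xm'_above m'm.
by have := m'max x xup; rewrite /= leNgt above_weight.
Qed.

(* Mirsky: the maxima of T form an antichain, and every chain of the other
   elements extends by a maximum above its top. *)
Lemma card_le_chain_antichain (k a : nat) (T : {set V}) :
  (forall A : {set V}, A \subset T -> chain A -> (#|A| <= k)%N) ->
  (forall A : {set V}, A \subset T -> antichain A -> (#|A| <= a)%N) ->
  (#|T| <= k * a)%N.
Proof.
elim: k T => [|k IH] T chainT antichainT.
  rewrite mul0n leqn0 cards_eq0; apply/eqP/setP => u; rewrite inE.
  apply/negP => uT.
  have ch1 : chain [set u] by move=> x y /set1P -> /set1P ->; rewrite eqxx.
  by have := chainT [set u]; rewrite sub1set uT cards1 => /(_ isT ch1).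
rewrite -(cardsID (maxima T) T) (setIidPr (maxima_sub T)) mulSn.
apply: leq_add; first exact: antichainT _ (maxima_sub T) (@antichain_maxima T).
apply: IH => [A AT chA|A AT]; last by apply: antichainT; apply: subset_trans AT (subsetDl _ _).
case: (set_0Vmem A) => [->|[a0 a0A]]; first by rewrite cards0.
have [m mA mtop] := chain_top chA a0A.
have [|m' m'max m'm] := @maxima_above T m; first by move: (subsetP AT _ mA); rewrite inE => /andP[].
have m'A : m' \notin A by apply: contraL m'max => /(subsetP AT); rewrite inE => /andP[].
suff : (#|m' |: A| <= k.+1)%N by rewrite cardsU1 m'A.
apply: chainT.
  by rewrite subUset sub1set (subsetP (maxima_sub T)) // (subset_trans AT) ?subsetDl.
move=> u v /setU1P[->|uA] /setU1P[->|vA] uv; first by rewrite eqxx in uv.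
- by left; apply: above_trans m'm (mtop _ vA).
- by right; apply: above_trans m'm (mtop _ uA).
- exact: chA.
Qed.
End ChainAntichain.

Lemma clique_has_Ktt (V : finType) (e : rel V) (t : nat) (M : {set V}) :
  (forall u v, u \in M -> v \in M -> u != v -> e u v) -> (2 * t <= #|M|)%N ->
  has_Ktt e t.
Proof.
move=> cliqueM tM; pose s := enum M.
have s_uniq : uniq s := enum_uniq _.
have size_s : size s = #|M| by rewrite -cardE.
pose A := [set x in take t s]; pose B := [set x in take t (drop t s)].
have AB : [disjoint A & B].
  rewrite disjoint_subset; apply/subsetP => x; rewrite !inE => xA.
  apply/negP => /mem_take xB; move: s_uniq; rewrite -(cat_take_drop t s) cat_uniq.
  by case/and3P => _ /hasPn/(_ x xB); rewrite xA.
exists A, B; split => //.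
- by rewrite cardsE (card_uniqP _) ?take_uniq // size_takel //; lia.
- by rewrite cardsE (card_uniqP _) ?take_uniq ?drop_uniq // size_takel // size_drop; lia.
move=> a b aA bB; apply: cliqueM.
- by move: aA; rewrite inE => /mem_take; rewrite mem_enum.
- by move: bB; rewrite inE => /mem_take /mem_drop; rewrite mem_enum.
- by apply: contraTneq aA => ->; rewrite (disjointFl AB bB).
Qed.

Section SquaredDistance.
Variables (R : realType) (d : nat).
Implicit Types (x y : 'rV[R]_d) (r : R).

Lemma dist2E x y : dist2 x y = vdist x y ^+ 2.
Proof. by rewrite vnorm_sqr; apply: eq_bigr => i _; rewrite !mxE expr2. Qed.

Lemma dist2_le x y r : 0 <= r -> (dist2 x y <= r ^+ 2) = (vdist x y <= r).
Proof. by move=> r0; rewrite dist2E ler_pXn2r ?nnegrE ?vdist_ge0. Qed.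

Lemma dist2_eq x y r : 0 <= r -> dist2 x y = r ^+ 2 <-> vdist x y = r.
Proof.
move=> r0; rewrite dist2E; split=> [|->] //.
by move/eqP; rewrite eqrXn2 ?vdist_ge0 // => /eqP.
Qed.
End SquaredDistance.

Section Spheres.
Variables (R : realType) (d : nat) (V : finType) (c : V -> 'rV[R]_d) (rho : V -> R).
Hypothesis rho_gt0 : forall v, 0 < rho v.
Let rho_ge0 v : 0 <= rho v := ltW (rho_gt0 v).

Lemma containsP v u : (0 < d)%N ->
  contains c rho v u <-> vdist (c u) (c v) + rho u <= rho v.
Proof.
move=> d0; rewrite -(ball_subP _ _ _ d0 (rho_ge0 u)).
by split=> sub x; [rewrite -!dist2_le | rewrite !dist2_le] => //; apply: sub.
Qed.

Lemma sphere_graph_meet u w : sphere_graph c rho u w ->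
  exists x, vdist x (c u) = rho u /\ vdist x (c w) = rho w.
Proof.
case/andP=> _ /asboolP[x [xu xw]].
by exists x; split; apply/dist2_eq.
Qed.

Lemma contains_rho_lt v u : (0 < d)%N -> injective (fun v => (c v, rho v)) ->
  contains c rho v u -> v != u -> rho u < rho v.
Proof.
move=> d0 inj /(containsP _ _ d0) le_uv; apply: contraNlt => le_vu.
have D0 := vdist_ge0 (c u) (c v).
have /eqP : vdist (c u) (c v) = 0 by lra.
rewrite vdist_eq0 => /eqP cuv; apply/eqP/inj; congr pair => //; lra.
Qed.

Lemma overlap_sphere_graph x u w : (1 < d)%N ->
  dist2 x (c u) <= rho u ^+ 2 -> dist2 x (c w) <= rho w ^+ 2 -> u != w ->
  ~ contains c rho u w -> ~ contains c rho w u -> sphere_graph c rho u w.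
Proof.
move=> d1 xu xw uw not_uw not_wu; have d0 : (0 < d)%N by apply: ltnW.
rewrite /sphere_graph uw; apply/asboolP.
rewrite !dist2_le ?rho_ge0 // in xu xw.
have far : `|rho u - rho w| < vdist (c u) (c w).
  rewrite ltr_norml; apply/andP; split; rewrite ltNge; apply/negP => le.
    by apply: not_wu; apply/containsP => //; lra.
  by apply: not_uw; apply/containsP; rewrite // vdistC; lra.
have near : vdist (c u) (c w) <= rho u + rho w.
  by have := vdist_triangle (c u) x (c w); rewrite vdistC in xu; lra.
have [p [pu pw]] := spheres_intersect d1 far near.
by exists p; split; apply/dist2_eq.
Qed.

Lemma point_ply_le (x : 'rV[R]_d) (t k : nat) : (1 < d)%N ->
  injective (fun v => (c v, rho v)) -> ~ has_Ktt (sphere_graph c rho) t ->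
  (forall A : {set V}, nested c rho A -> (#|A| <= k)%N) ->
  (#|[set u | (dist2 x (c u) <= rho u ^+ 2)%R]| <= k * (2 * t).-1)%N.
Proof.
move=> d1 inj noK nested_le; have d0 := ltnW d1.
apply: (@card_le_chain_antichain _ _ (contains c rho) rho) => [u|u v w|u v|A _|A AT antiA].
- by [].
- by move=> vu wv y /wv /vu.
- exact: contains_rho_lt d0 inj.
- exact: nested_le.
rewrite -ltnS (leq_trans _ (leqSpred _)) // ltnNge; apply/negP => tA; apply: noK.
apply: (clique_has_Ktt _ tA) => u v uA vA uv.
have /[!inE] xu := subsetP AT u uA; have /[!inE] xv := subsetP AT v vA.
have vu : v != u by rewrite eq_sym.
exact: overlap_sphere_graph xu xv uv (antiA u v uA vA uv) (antiA v u vA uA vu).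
Qed.
End Spheres.

Section Reach.
Variables (R : realType) (d : nat) (V : finType) (c : V -> 'rV[R]_d) (rho : V -> R).
Hypothesis rho_gt0 : forall v, 0 < rho v.
Notation G := (sphere_graph c rho).

Lemma path_last_sphere_near (z : 'rV[R]_d) (r a : R) w p :
  vdist (c w) z <= a -> path G w p -> p != [::] ->
  all (fun x => rho x <= r) (belast w p) ->
  exists y, vdist y (c (last w p)) = rho (last w p) /\
            vdist y z + r <= a + 2 * r * (size p)%:R.
Proof.
elim: p w a => [//|x p IH] w a wz /= /andP[wx xp] _ /andP[wr pr].
have [y [yw yx]] := sphere_graph_meet rho_gt0 wx.
have yz : vdist y z <= a + r by have := vdist_triangle y (c w) z; rewrite yw; lra.
have [p0|p0] := eqVneq p [::]; first by exists y; rewrite p0 /= mulr1; split => //; lra.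
have xr : rho x <= r by case: p p0 pr {IH xp} => // ? ? _ /andP[].
have xz : vdist (c x) z <= a + 2 * r.
  by have := vdist_triangle (c x) y z; rewrite [vdist (c x) y]vdistC yx; lra.
have [y' [y'p y'z]] := IH x _ xz xp p0 pr.
by exists y'; split => //; rewrite -addn1 natrD; lra.
Qed.

Variables (s : {perm V}) (r : nat).
Hypothesis rho_sorted : forall a b, (pos s a <= pos s b)%N -> rho b <= rho a.

Lemma sreach_inner_ball v u : (0 < d)%N -> sreach G r s v u ->
  exists q, vdist q (c v) <= 2 * r%:R * rho v /\
            forall x, vdist x q <= rho v -> vdist x (c u) <= rho u.
Proof.
move=> d0 /andP[uv /existsP[m /existsP[p /and4P[vp /eqP pu _ pv]]]].
have {}pv : all (fun x => rho x <= rho v) (belast v p) by apply: sub_all pv => x /rho_sorted.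
have [p0|p0] := eqVneq (tval p) [::].
  exists (c v); split; first by rewrite vdistxx !mulr_ge0 // ltW.
  by move: pu; rewrite p0 /= => ->.
have vv : vdist (c v) (c v) <= 0 by rewrite vdistxx.
have [y [yu yv]] := path_last_sphere_near vv vp p0 pv; rewrite pu in yu.
have rvu : 0 <= rho v <= rho u by rewrite ltW //= rho_sorted.
have [q [qy qu]] := inner_ball d0 rvu (rho_gt0 u) yu.
exists q; split => //; have := vdist_triangle q y (c v).
have : (size p)%:R <= r%:R :> R by rewrite ler_nat size_tuple -ltnS.
have := rho_gt0 v; nra.
Qed.
End Reach.

Lemma exists_perm_sorted (V : finType) (disp : Order.disp_t) (T : orderType disp)
    (f : V -> T) :
  exists s : {perm V}, forall a b, (pos s a <= pos s b)%N -> (f b <= f a)%O.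
Proof.
pose ge_f : rel V := fun a b => (f b <= f a)%O.
pose L := sort ge_f (enum V).
have memL a : a \in L by rewrite mem_sort mem_enum.
have idxL a : (index a L < #|V|)%N by rewrite cardE -(size_sort ge_f) index_mem.
pose g a : V := enum_val (Ordinal (idxL a)).
have g_inj : injective g.
  move=> a b /(congr1 enum_rank); rewrite !enum_valK => /(congr1 val) /= eq_ab.
  by rewrite -(nth_index a (memL a)) eq_ab nth_index.
exists (perm g_inj) => a b; rewrite /pos !permE !enum_valK /=.
have ge_f_trans : transitive ge_f by move=> x y z yx zy; apply: le_trans zy yx.
have ge_f_refl : reflexive ge_f by move=> x; rewrite /ge_f.
have L_sorted : sorted ge_f L by apply: sort_sorted => x y; rewrite /ge_f le_total.
exact: (sorted_leq_index ge_f_trans ge_f_refl L_sorted).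
Qed.

Lemma scol_le_width (V : finType) (e : rel V) (r : nat) (s : {perm V}) :
  (scol e r <= width e r s)%N.
Proof. by rewrite /scol -minEnat -leEnat; apply: bigmin_le. Qed.

Section Width.
Variables (R : realType) (d t k : nat) (V : finType) (c : V -> 'rV[R]_d) (rho : V -> R).
Hypotheses (d1 : (1 < d)%N) (rho_gt0 : forall v, 0 < rho v).
Hypothesis inj : injective (fun v => (c v, rho v)).
Hypothesis noK : ~ has_Ktt (sphere_graph c rho) t.
Hypothesis nested_le : forall A : {set V}, nested c rho A -> (#|A| <= k)%N.
Variables (s : {perm V}) (r : nat).
Hypothesis rho_sorted : forall a b, (pos s a <= pos s b)%N -> rho b <= rho a.

Lemma card_sreach_le v :
  (#|[set u | sreach (sphere_graph c rho) r s v u]| <= k * (2 * t).-1 * (2 * r).+2 ^ d)%N.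
Proof.
have d0 := ltnW d1; set Rv := [set u | _].
have /choice[q qP] : forall u, exists qu : 'rV[R]_d, u \in Rv ->
    vdist qu (c v) <= (2 * r)%:R * rho v /\
    forall x, vdist x qu <= rho v -> vdist x (c u) <= rho u.
  move=> u; case: (boolP (u \in Rv)) => [|_]; last by exists 0.
  rewrite inE => /(sreach_inner_ball rho_gt0 rho_sorted d0)[qu [qv qu_in]].
  by exists qu => _; rewrite natrM.
apply: (card_le_packing (L := 2 * r) (c := c v) (q := q) d0 (rho_gt0 v)) => [u /qP[]//|x].
apply: (leq_trans _ (point_ply_le rho_gt0 x d1 inj noK nested_le)); apply: subset_leq_card.
apply/subsetP => u; rewrite inE => /andP[uR xq]; have [_ qu] := qP u uR.
by rewrite inE dist2_le; [apply: qu | apply: ltW].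
Qed.
End Width.

Theorem lemma4p3 (R : realType) (d t k : nat) (V : finType)
    (c : V -> 'rV[R]_d) (rho : V -> R) :
  (2 <= d)%N -> (0 < t)%N -> (0 < k)%N ->
  (forall v, 0 < rho v) ->
  injective (fun v => (c v, rho v)) ->
  ~ has_Ktt (sphere_graph c rho) t ->
  (forall A : {set V}, nested c rho A -> (#|A| <= k)%N) ->
  forall r : nat, (0 < r)%N ->
    (scol (sphere_graph c rho) r <= 2 * k * t * (2 * r + 2) ^ d)%N.
Proof.
move=> d2 _ _ rho_gt0 inj noK nested_le r _.
have [s rho_sorted] := exists_perm_sorted rho.
apply: leq_trans (scol_le_width _ _ s) _; apply/bigmax_leqP => v _.
apply: (leq_trans (card_sreach_le d2 rho_gt0 inj noK nested_le r rho_sorted v)).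
by rewrite addn2 leq_mul2r; apply/orP; right; lia.
Qed.
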